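(* Let $S\subseteq 2^E$ be a powerful set with $|E|=n$ and $r_S(E)=n-1$. Then $S$ has a deletable element $e\in E$.
   Context: A set $S\subseteq 2^E$ ($E$ finite) is powerful if for every $X\subseteq E$ the number of members of $S$ contained in $X$ is a power of 2. Its rank function is $r_S(X)=\log_2\big(|S|/|\{Y\in S:Y\subseteq E\setminus X\}|\big)$. Let $f$ be the $\{0,1\}$-valued indicator function of $S$. For $e\in E$ let $g(X)=f(X)+f(X\cup\{e\})$ for $X\subseteq E\setminus\{e\}$; the element $e$ is deletable if $\frac{1}{g(\emptyset)}g$ is $\{0,1\}$-valued, i.e. the deletion of $e$ (the multiset over $E\setminus\{e\}$ with indicator $g$) is, up to scaling, a powerful set, namely $\{X\subseteq E\setminus\{e\}: X\in S\text{ or }X\cup\{e\}\in S\}$. *)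

(* Ground set E is a finType T; subsets of E are {set T}. *)
From mathcomp Require Import all_boot.
Set Implicit Arguments. Unset Strict Implicit. Unset Printing Implicit Defensive.

Section Powerful.
Variable T : finType.

Definition nbelow (S : {set {set T}}) (X : {set T}) : nat :=
  #|[set Y in S | Y \subset X]|.

Definition powerful (S : {set {set T}}) : Prop :=
  forall X : {set T}, exists k : nat, nbelow S X = 2 ^ k.

(* For powerful S both
   counts are powers of 2 (the denominator dividing the numerator), so the
   quotient is an exact power of 2 and trunc_log 2 is the exact log2. *)
Definition rank (S : {set {set T}}) (X : {set T}) : nat :=
  trunc_log 2 (#|S| %/ nbelow S (~: X)).

Definition del_count (S : {set {set T}}) (e : T) (X : {set T}) : nat :=
  (X \in S) + ((X :|: [set e]) \in S).

(* e is deletable: g / g(emptyset) is {0,1}-valued (with g(emptyset) <> 0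
   so that the scaling is defined) *)
Definition deletable (S : {set {set T}}) (e : T) : Prop :=
  del_count S e set0 <> 0 /\
  forall X : {set T}, X \subset ~: [set e] ->
    del_count S e X = 0 \/ del_count S e X = del_count S e set0.

End Powerful.

From mathcomp Require Import all_boot zify.
Set Implicit Arguments. Unset Strict Implicit. Unset Printing Implicit Defensive.

(* Write c(X) for the number of members of S below X; powerfulness makes every
   c(X) a power of 2, and in particular forces set0 \in S.

   If a singleton {x} is in S, then c(x |: Z) >= 2 is even while the proper
   subsets of Z contribute an even amount to it (by induction), so Z and x |: Z
   are together in S or together out of it: x is deletable.

   Otherwise c(W) <= 2^(|W|-1) for nonempty W, and r_S(E) = |E| - 1 says that E
   attains this bound ("is tight").  If v is universal in W (every pair {v, y}
   with y in W lies in S), the same parity count shows that exactly one of Z and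
   v |: Z lies in S for each Z in W - v; for W = E this makes v deletable.  Tight
   sets have universal elements, by induction: inclusion-exclusion shows that
   for distinct x, y of a tight W one of W - x, W - y is tight, and universal
   elements of two tight W - x are glued into one of W, with a four-point count
   settling the case where they are not adjacent. *)

Lemma proper_set_ind (T : finType) (P : {set T} -> Prop) :
  (forall Z : {set T}, (forall Y : {set T}, Y \proper Z -> P Y) -> P Z) ->
  forall Z, P Z.
Proof.
move=> IH Z; elim: {Z}#|Z|.+1 {-2}Z (ltnSn #|Z|) => // n IHn Z ltZ.
by apply: IH => Y /proper_card ltY; apply: IHn; exact: leq_trans ltY ltZ.
Qed.

Section Counting.
Variables (T : finType) (S : {set {set T}}).
Implicit Types (W X Y Z : {set T}) (e x y : T).

Lemma card_sepE (P : pred {set T}) :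
  #|[set Y in S | P Y]| = \sum_(Y in S) P Y.
Proof.
rewrite -sum1_card big_mkcond [RHS]big_mkcond; apply: eq_bigr => Y _.
by rewrite inE; case: (Y \in S); case: (P Y).
Qed.

Lemma nbelowE X : nbelow S X = \sum_(Y in powerset X) (Y \in S).
Proof.
rewrite /nbelow -sum1_card big_mkcond [RHS]big_mkcond; apply: eq_bigr => Y _.
by rewrite !inE; case: (Y \in S); case: (Y \subset X).
Qed.

Lemma sum_powersetU1 (F : {set T} -> nat) e Z : e \notin Z ->
  \sum_(Y in powerset (e |: Z)) F Y = \sum_(Y in powerset Z) (F Y + F (e |: Y)).
Proof.
move=> eZ; have subZ Y : (Y \subset Z) = (Y \subset e |: Z) && (e \notin Y).
  by rewrite -subsetD1 setU1K.
rewrite big_split (bigID (fun Y => e \in Y)) /= addnC; congr (_ + _).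
  by apply: eq_bigl => Y; rewrite !powersetE subZ.
rewrite (reindex_onto (fun Y => e |: Y) (fun Y => Y :\ e)) /=; last first.
  by move=> Y /andP[_ eY]; rewrite setD1K.
apply: eq_bigl => Y; rewrite !powersetE setU11 andbT subZ.
have [eY|eY] := boolP (e \in Y); last by rewrite setU1K // eqxx subUset sub1set setU11.
rewrite andbF; apply/negbTE/negP => /andP[_ /eqP YD].
by move: eY; rewrite -YD setD11.
Qed.

Lemma nbelowU1 e Z : e \notin Z ->
  nbelow S (e |: Z) = \sum_(Y in powerset Z) ((Y \in S) + (e |: Y \in S)).
Proof. by move=> eZ; rewrite nbelowE sum_powersetU1. Qed.

Definition nthrough W x y := #|[set Y in S | [&& Y \subset W, x \in Y & y \in Y]]|.

Lemma nbelow_incl_excl W x y :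
  nbelow S W + nbelow S (W :\ x :\ y) =
  nbelow S (W :\ x) + nbelow S (W :\ y) + nthrough W x y.
Proof.
rewrite /nthrough /nbelow !card_sepE -!big_split /=; apply: eq_bigr => Y _.
by rewrite !subsetD1; case: (Y \subset W); case: (x \in Y); case: (y \in Y).
Qed.

Lemma nthrough_le x y W : x \in W -> y \in W -> x != y ->
  4 * nthrough W x y <= 2 ^ #|W|.
Proof.
move=> xW yW xy.
have sub : [set Y in S | [&& Y \subset W, x \in Y & y \in Y]] \subset
           [set x |: (y |: Z) | Z in powerset (W :\ x :\ y)].
  apply/subsetP => Y; rewrite !inE => /and4P[_ sYW xY yY].
  apply/imsetP; exists (Y :\ x :\ y); first by rewrite powersetE !setSD.
  by rewrite setD1K ?setD1K // in_setD1 eq_sym xy.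
have := leq_trans (subset_leq_card sub) (leq_imset_card _ _).
rewrite card_powerset (cardsD1 x W) xW (cardsD1 y (W :\ x)) in_setD1 eq_sym xy yW.
by rewrite !expnS mulnA leq_mul2l.
Qed.

End Counting.

Lemma ltn_pow2_double a n : 2 ^ a < 2 ^ n -> 2 * 2 ^ a <= 2 ^ n.
Proof. by rewrite -expnS ltn_exp2l // leq_exp2l. Qed.

Section Powerful.
Variables (T : finType) (S : {set {set T}}).
Hypothesis S_pow : powerful S.
Implicit Types (X Y Z : {set T}) (x : T).

Lemma nbelow_gt0 X : 0 < nbelow S X.
Proof. by have [k ->] := S_pow X; rewrite expn_gt0. Qed.

Lemma powerful_set0 : set0 \in S.
Proof.
have /card_gt0P[Y] := nbelow_gt0 set0.
by rewrite !inE subset0 => /andP[YS /eqP <-].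
Qed.

Lemma nbelow0 : nbelow S set0 = 1.
Proof. by rewrite nbelowE powerset0 big_set1 powerful_set0. Qed.

Lemma nbelow_even X Y : Y \in S -> Y != set0 -> Y \subset X -> ~~ odd (nbelow S X).
Proof.
move=> YS Y0 YX.
have sub : [set set0; Y] \subset [set Z in S | Z \subset X].
  by rewrite subUset !sub1set !inE powerful_set0 sub0set YS YX.
have := subset_leq_card sub; rewrite cards2 eq_sym Y0 -/(nbelow S X).
by have [[|k] ->] := S_pow X; rewrite // oddX.
Qed.

Lemma singleton_shift x Z : [set x] \in S -> x \notin Z -> (x |: Z \in S) = (Z \in S).
Proof.
move=> xS; elim/proper_set_ind: Z => Z IH xZ.
have x0 : [set x] != set0 by rewrite -card_gt0 cards1.
have := nbelow_even xS x0 (subsetUl [set x] Z).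
rewrite nbelowU1 // (bigD1 Z) ?powersetE //=.
rewrite (eq_bigr (fun Y => (Y \in S) * 2)) => [|Y]; last first.
  rewrite powersetE => /andP[YZ YnZ]; rewrite IH ?muln2 -?addnn //.
    by rewrite properEneq YnZ.
  by apply: contra xZ; apply: (subsetP YZ).
rewrite -big_distrl /= oddD muln2 odd_double addbF oddD.
by case: (Z \in S); case: (x |: Z \in S).
Qed.

Lemma singleton_deletable x : [set x] \in S -> deletable S x.
Proof.
move=> xS; rewrite /deletable /del_count set0U powerful_set0 xS; split=> // X.
rewrite subsetC sub1set inE => xX.
by rewrite setUC singleton_shift //; case: (X \in S); [right | left].
Qed.

End Powerful.

Section NoSingletons.
Variables (T : finType) (S : {set {set T}}).
Hypothesis S_pow : powerful S.
Hypothesis S_nosingleton : forall y : T, [set y] \notin S.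
Implicit Types (P W X Y Z : {set T}) (e u v w x y : T).

(* Equivalently, r_S(W) = |W| - 1 for the restriction of S to W. *)
Definition tight W := 2 * nbelow S W == 2 ^ #|W|.

Definition universal W v := v \in W /\ {in W, forall y, y != v -> [set v; y] \in S}.

Lemma nbelow_bound W : W != set0 -> 2 * nbelow S W <= 2 ^ #|W|.
Proof.
case/set0Pn => y yW; have [k Ek] := S_pow W; rewrite Ek.
apply: ltn_pow2_double; rewrite -Ek -card_powerset (cardsD1 [set y] (powerset W)).
rewrite inE sub1set yW.
have sub : [set Y in S | Y \subset W] \subset powerset W :\ [set y].
  apply/subsetP => Y; rewrite !inE => /andP[YS ->]; rewrite andbT.
  by apply: contraTneq YS => ->.
exact: subset_leq_card sub.
Qed.

Lemma untight_le W : W != set0 -> ~~ tight W -> 4 * nbelow S W <= 2 ^ #|W|.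
Proof.
move=> W0 ntW; have [k Ek] := S_pow W.
have : 2 ^ k.+1 < 2 ^ #|W| by rewrite ltn_neqAle expnS -Ek ntW nbelow_bound.
by move/ltn_pow2_double; rewrite Ek expnS mulnA.
Qed.

Lemma tight_D1 W x y : tight W -> x \in W -> y \in W -> x != y ->
  tight (W :\ x) || tight (W :\ y).
Proof.
move=> /eqP tW xW yW xy; apply/negPn/negP; rewrite negb_or => /andP[ntx nty].
have Wx : #|W| = #|W :\ x|.+1 by rewrite (cardsD1 x W) xW.
have Wy : #|W :\ y| = #|W :\ x| by apply: succn_inj; rewrite -Wx (cardsD1 y W) yW.
have Wx0 : W :\ x != set0 by apply/set0Pn; exists y; rewrite in_setD1 eq_sym xy.
have Wy0 : W :\ y != set0 by apply/set0Pn; exists x; rewrite in_setD1 xy.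
have lex := untight_le Wx0 ntx; have ley := untight_le Wy0 nty.
have := nthrough_le S xW yW xy; have := nbelow_incl_excl S W x y.
have := nbelow_gt0 S_pow (W :\ x :\ y).
move: tW lex ley; rewrite Wy Wx expnS; lia.
Qed.

(* The proper subsets Y of Z contribute 1 each, so c(e |: Z) = a + 2^|Z| - 1
   with a the contribution of Z; c(e |: Z) is even as it counts set0 and
   [set e; y], hence a is odd. *)
Lemma universal_split W e : universal W e ->
  forall Z, Z \subset W :\ e -> (Z \in S) + (e |: Z \in S) = 1.
Proof.
move=> [eW eU]; elim/proper_set_ind => Z IH ZWe; have /subsetD1P[ZW eZ] := ZWe.
have [->|[y yZ]] := set_0Vmem Z.
  by rewrite powerful_set0 // setU0 (negbTE (S_nosingleton e)).
have ye : y != e by apply: contraNneq eZ => <-.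
have eyS := eU y (subsetP ZW y yZ) ye.
have ey0 : [set e; y] != set0 by apply/set0Pn; exists e; rewrite !inE eqxx.
have yZ1 : [set y] \subset Z by rewrite sub1set.
have := nbelow_even S_pow eyS ey0 (setUS [set e] yZ1).
rewrite nbelowU1 // (bigD1 Z) ?powersetE //= (eq_bigr (fun=> 1)) => [|Y]; last first.
  rewrite powersetE => /andP[YZ YnZ]; apply: IH; first by rewrite properEneq YnZ.
  exact: subset_trans YZ ZWe.
have := card_powerset Z; rewrite -sum1_card (bigD1 Z) ?powersetE //=.
move: (\sum_(_ in _ | _) 1) => s sZ.
have Z0 : #|Z| != 0 by rewrite cards_eq0; apply/set0Pn; exists y.
have odd_s : odd s by rewrite -[odd s]negbK -oddS -add1n sZ oddX (negbTE Z0).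
rewrite oddD odd_s addbT negbK oddD.
by case: (Z \in S); case: (e |: Z \in S).
Qed.

Lemma universal_tight W e : universal W e -> tight W.
Proof.
move=> eU; have eW := eU.1.
rewrite /tight -(setD1K eW) nbelowU1 ?setD11 // (eq_bigr (fun=> 1)) => [|Z].
  by rewrite sum1_card card_powerset cardsU1 setD11 add1n -expnS.
by rewrite powersetE; apply: universal_split.
Qed.

Lemma universalS W W' e : universal W e -> e \in W' -> W' \subset W -> universal W' e.
Proof. by move=> [_ eU] eW' /subsetP sW; split=> // y /sW; apply: eU. Qed.

Lemma nbelow_pair v w : v != w -> nbelow S [set v; w] = 1 + ([set v; w] \in S).
Proof.
move=> vw; rewrite nbelowU1 ?inE // powerset1 big_setU1 ?big_set1 /=; last first.
  by rewrite inE eq_sym; apply/set0Pn; exists w; rewrite inE.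
by rewrite powerful_set0 // setU0 (negbTE (S_nosingleton v)) (negbTE (S_nosingleton w)).
Qed.

Lemma tight_pair v w : v != w -> tight [set v; w] -> [set v; w] \in S.
Proof. by move=> vw; rewrite /tight nbelow_pair // cards2 vw; case: (_ \in S). Qed.

Lemma leq_card_nthrough x u P :
  x \notin P -> u \notin P -> [set x; u] \notin S ->
  universal (x |: P) x -> universal (u |: P) u ->
  #|P| <= nthrough S (x |: (u |: P)) x u.
Proof.
move=> xP uP xuS xU uU.
have vxuS v : v \in P -> v |: [set x; u] \in S.
  move=> vP; have vx : v != x by apply: contraNneq xP => <-.
  have vu : v != u by apply: contraNneq uP => <-.
  have vU : universal (v |: [set x; u]) v.
    split=> [|y]; first exact: setU11.
    rewrite !inE => /or3P[/eqP->|/eqP->|/eqP->]; rewrite ?eqxx // => _; rewrite setUC.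
      by apply: xU.2; rewrite ?inE ?vP ?orbT // eq_sym.
    by apply: uU.2; rewrite ?inE ?vP ?orbT // eq_sym.
  have vxu : v \notin [set x; u] by rewrite !inE negb_or vx vu.
  have := universal_split vU; rewrite setU1K // => /(_ _ (subxx _)).
  by rewrite (negbTE xuS); case: (_ \in S).
have inj : {in P &, injective (fun v => v |: [set x; u])}.
  move=> v v' vP v'P /setP /(_ v); rewrite !inE eqxx => /esym /or3P[/eqP //|/eqP|/eqP] vE.
    by rewrite -vE vP in xP.
  by rewrite -vE vP in uP.
rewrite -(card_in_imset inj); apply: subset_leq_card.
apply/subsetP => _ /imsetP[v vP ->]; rewrite !inE vxuS //= !eqxx !orbT /= andbT.
by rewrite !subUset !sub1set !inE vP !eqxx !orbT.
Qed.

(* Inclusion-exclusion in W = x |: u |: P: c(x |: P) = c(u |: P) = 4 by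
   universality, c(W) <= 8, and at least two members of S below W contain
   both x and u; hence c(P) >= 2. *)
Lemma square_pair x u P :
  x \notin u |: P -> u \notin P -> [set x; u] \notin S ->
  universal (x |: P) x -> universal (u |: P) u -> #|P| = 2 -> P \in S.
Proof.
move=> xuP uP xuS xU uU P2.
have [ux xP] : u != x /\ x \notin P by move: xuP; rewrite !inE negb_or eq_sym => /andP[].
have through := leq_card_nthrough xP uP xuS xU uU.
pose W := x |: (u |: P); have W0 : W != set0 by apply/set0Pn; exists x; rewrite setU11.
have Wx : W :\ x = u |: P by rewrite setU1K.
have Wu : W :\ u = x |: P by rewrite /W setUCA setU1K // !inE negb_or ux.
have Wxu : W :\ x :\ u = P by rewrite Wx setU1K.
have bW := nbelow_bound W0; have ie := nbelow_incl_excl S W x u.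
have /eqP tx := universal_tight xU; have /eqP tu := universal_tight uU.
rewrite Wxu Wx Wu in ie; rewrite -/W P2 in through.
rewrite (_ : #|W| = 4) in bW; last by rewrite !cardsU1 xuP uP P2.
rewrite (_ : #|x |: P| = 3) in tx; last by rewrite cardsU1 xP P2.
rewrite (_ : #|u |: P| = 3) in tu; last by rewrite cardsU1 uP P2.
have : 2 <= nbelow S P by lia.
have /cards2P[v [y [vy PE]]] : #|P| == 2 by rewrite P2.
by rewrite PE nbelow_pair //; case: (_ \in S).
Qed.

Lemma universal_extend W x u w : x \in W -> 2 < #|W| ->
  universal (W :\ x) u -> universal (W :\ u) w -> exists v, universal W v.
Proof.
move=> xW W3 uU wU; have [/setD1P[ux uW] uUx] := uU; have [/setD1P[wu wW] wUu] := wU.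
have [xuS|xuNS] := boolP ([set u; x] \in S).
  exists u; split=> // y yW yu; have [-> //|yx] := eqVneq y x.
  by apply: uUx; rewrite // in_setD1 yx.
have [wx|wx] := eqVneq w x; last first.
  exists w; split=> // y yW yw; have [->|yu] := eqVneq y u.
    by rewrite setUC; apply: uUx; rewrite // in_setD1 wx.
  by apply: wUu; rewrite // in_setD1 yu.
subst w; have : 0 < #|W :\ x :\ u|.
  by move: W3; rewrite (cardsD1 x W) xW (cardsD1 u (W :\ x)) in_setD1 ux uW.
case/card_gt0P => v /setD1P[vu /setD1P[vx vW]].
exists v; split=> // y yW yv.
have [->|yx] := eqVneq y x; first by rewrite setUC; apply: wUu; rewrite // in_setD1 vu.
have [->|yu] := eqVneq y u; first by rewrite setUC; apply: uUx; rewrite // in_setD1 vx.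
apply: (@square_pair x u); rewrite ?cards2 1?eq_sym ?yv //.
- by rewrite !inE !negb_or eq_sym ux eq_sym vx eq_sym yx.
- by rewrite !inE !negb_or eq_sym vu eq_sym yu.
- by rewrite setUC.
- apply: (universalS wU); first exact: setU11.
  by rewrite !subUset !sub1set !in_setD1 wu xW vu vW yu yW.
- apply: (universalS uU); first exact: setU11.
  by rewrite !subUset !sub1set !in_setD1 ux uW vx vW yx yW.
Qed.

Lemma tight_removable W : tight W -> 2 < #|W| ->
  exists x1 x2, [/\ x1 \in W, x2 \in W, x1 != x2, tight (W :\ x1) & tight (W :\ x2)].
Proof.
move=> tW W3; pose R := [set x | tight (W :\ x)].
have : #|W :\: R| <= 1.
  apply/card_le1_eqP => x y /setDP[xW xR] /setDP[yW yR]; rewrite !inE in xR yR.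
  apply/eqP/negPn/negP => yx; have := tight_D1 tW yW xW yx.
  by rewrite (negbTE xR) (negbTE yR).
move: W3; rewrite -(cardsID R W) => W3 WR.
have /card_gt1P[x1 [x2 [/setIP[x1W x1R] /setIP[x2W x2R] x12]]] : 1 < #|W :&: R| by lia.
by exists x1, x2; rewrite !inE in x1R x2R.
Qed.

Lemma tight_universal W : tight W -> W != set0 -> exists v, universal W v.
Proof.
elim: {W}#|W| {-2}W (erefl #|W|) => [|n IH] W Wn tW W0.
  by move: W0; rewrite -card_gt0 Wn.
case: n IH Wn => [|[|n]] IH Wn.
- have /cards1P[v ->] : #|W| == 1 by rewrite Wn.
  by exists v; split=> [|y]; rewrite !inE // => /eqP ->; rewrite eqxx.
- have /cards2P[v [w [vw WE]]] : #|W| == 2 by rewrite Wn.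
  rewrite WE in tW; exists v; rewrite WE; split=> [|y]; first by rewrite !inE eqxx.
  by rewrite !inE => /orP[/eqP -> /eqP //|/eqP -> _]; apply: tight_pair.
have W3 : 2 < #|W| by rewrite Wn.
have IHD1 x : x \in W -> tight (W :\ x) -> exists u, universal (W :\ x) u.
  move=> xW txW; have Wx : #|W :\ x| = n.+2 by move: Wn; rewrite (cardsD1 x W) xW => -[].
  by apply: IH => //; rewrite -card_gt0 Wx.
have [x1 [x2 [x1W x2W x12 t1 t2]]] := tight_removable tW W3.
have [u1 u1U] := IHD1 x1 x1W t1; have [u2 u2U] := IHD1 x2 x2W t2.
have /setD1P[_ u1W] := u1U.1; have /setD1P[_ u2W] := u2U.1.
have [u12|u12] := eqVneq u1 u2.
  exists u1; split=> // y yW yu; have [yx1|yx1] := eqVneq y x1.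
    by rewrite u12 in yu *; apply: u2U.2; rewrite // in_setD1 yW andbT yx1.
  by apply: u1U.2; rewrite // in_setD1 yx1.
have [tu|tu] := orP (tight_D1 tW u1W u2W u12).
  by have [w wU] := IHD1 u1 u1W tu; apply: universal_extend x1W W3 u1U wU.
by have [w wU] := IHD1 u2 u2W tu; apply: universal_extend x2W W3 u2U wU.
Qed.

Lemma universal_deletable e : universal [set: T] e -> deletable S e.
Proof.
move=> eU; have del1 X : X \subset ~: [set e] -> del_count S e X = 1.
  by rewrite -setTD => /(universal_split eU); rewrite /del_count setUC.
by split=> [|X /del1 ->]; rewrite del1 ?sub0set //; right.
Qed.

End NoSingletons.

Unset Implicit Arguments.
Theorem theorem6 (T : finType) (S : {set {set T}}) :
  powerful S -> rank S [set: T] + 1 = #|T| ->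
  exists e : T, deletable S e.
Proof.
move=> S_pow rankT.
have [x xS|noS1] := pickP (fun x : T => [set x] \in S).
  by exists x; apply: singleton_deletable.
have S_nosingleton y : [set y] \notin S by rewrite noS1.
have [k Ek] := S_pow setT.
have ST : #|S| = 2 ^ k by rewrite -Ek; apply: eq_card => Y; rewrite !inE subsetT andbT.
have rankE : rank S [set: T] = k by rewrite /rank setCT nbelow0 // divn1 ST trunc_expnK.
have tT : tight S [set: T] by rewrite /tight Ek cardsT -rankT rankE addn1 expnS.
have T0 : [set: T] != set0 by rewrite -card_gt0 cardsT -rankT addn1 ltn0Sn.
have [e eU] := tight_universal S_pow S_nosingleton tT T0.
by exists e; apply: (universal_deletable S_pow S_nosingleton).
Qed.
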